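(* Let $\Omega\subset\mathbb{R}^n$ be open and let $L$ be the operator $$L=\Delta_x+\Delta_y+2\sum_i\frac{\partial^2}{\partial x_i\partial y_i}-4\sum_{i,j}X_iX_j\frac{\partial^2}{\partial x_i\partial y_j}$$ on $\{(x,y)\in\Omega\times\Omega:x\ne y\}$, where $X=|y-x|$ and $X_i=(y_i-x_i)/X$. Then for every smooth function $v$ on $\Omega$, with $\tilde X=(X_1,\dots,X_n)=\frac{y-x}{|y-x|}$, $$L\Big\{\big[\nabla v(y)-\nabla v(x)\big]\cdot\tilde X\Big\}=\big[\nabla\Delta v(y)-\nabla\Delta v(x)\big]\cdot\tilde X.$$ *)

From Stdlib Require Import Reals Classical ClassicalEpsilon.
From mathcomp Require Import ssreflect ssrbool eqtype ssrnat fintype bigop.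

Open Scope R_scope.

Definition Rn (n : nat) := 'I_n -> R.

Definition upd {n} (x : Rn n) (i : 'I_n) (t : R) : Rn n :=
  fun j => if j == i then t else x j.

Definition sumI (n : nat) (F : 'I_n -> R) : R := \big[Rplus/R0]_(i < n) F i.

(* The i-th partial derivative of F at x (the derivative of the one-variable
   restriction t |-> F(x with x_i := t) at t = x_i); chosen by Hilbert's
   epsilon, so it is the partial derivative whenever the latter exists. *)
Definition pd {n} (i : 'I_n) (F : Rn n -> R) (x : Rn n) : R :=
  epsilon (inhabits R0)
    (fun l => derivable_pt_lim (fun t => F (upd x i t)) (x i) l).

Definition has_pd {n} (i : 'I_n) (F : Rn n -> R) (x : Rn n) : Prop :=
  exists l, derivable_pt_lim (fun t => F (upd x i t)) (x i) l.

Fixpoint pdl {n} (ks : list 'I_n) (F : Rn n -> R) : Rn n -> R :=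
  match ks with
  | nil => F
  | cons k ks' => pd k (pdl ks' F)
  end.

(* Continuity at x on R^n (sup-norm, equivalent to Euclidean). *)
Definition cont_at {n} (F : Rn n -> R) (x : Rn n) : Prop :=
  forall eps, 0 < eps -> exists del, 0 < del /\
    forall y : Rn n, (forall i, Rabs (y i - x i) < del) -> Rabs (F y - F x) < eps.

Definition openRn {n} (O : Rn n -> Prop) : Prop :=
  forall x, O x -> exists e, 0 < e /\
    forall y : Rn n, (forall i, Rabs (y i - x i) < e) -> O y.

Definition smooth_on {n} (O : Rn n -> Prop) (v : Rn n -> R) : Prop :=
  forall (ks : list 'I_n) (x : Rn n), O x ->
    cont_at (pdl ks v) x /\ forall i, has_pd i (pdl ks v) x.

Definition lap {n} (v : Rn n -> R) : Rn n -> R :=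
  fun x => sumI n (fun i => pd i (pd i v) x).

Definition dx {n} (i : 'I_n) (W : Rn n -> Rn n -> R) : Rn n -> Rn n -> R :=
  fun x y => pd i (fun x' => W x' y) x.
Definition dy {n} (j : 'I_n) (W : Rn n -> Rn n -> R) : Rn n -> Rn n -> R :=
  fun x y => pd j (W x) y.

Definition Xn {n} (x y : Rn n) : R := sqrt (sumI n (fun i => (y i - x i) ^ 2)).
Definition Xc {n} (i : 'I_n) (x y : Rn n) : R := (y i - x i) / Xn x y.

Definition Lop {n} (W : Rn n -> Rn n -> R) (x y : Rn n) : R :=
  sumI n (fun i => dx i (dx i W) x y)
  + sumI n (fun i => dy i (dy i W) x y)
  + 2 * sumI n (fun i => dx i (dy i W) x y)
  - 4 * sumI n (fun i => sumI n (fun j => Xc i x y * Xc j x y * dx i (dy j W) x y)).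

Definition grad_diff_dot {n} (u : Rn n -> R) : Rn n -> Rn n -> R :=
  fun x y => sumI n (fun i => (pd i u y - pd i u x) * Xc i x y).

From HB Require Import structures.
From Stdlib Require Import Reals Lra.
From Stdlib Require Import Classical ClassicalEpsilon FunctionalExtensionality PropExtensionality.
From mathcomp Require Import ssreflect ssrbool eqtype ssrnat seq fintype bigop.
Open Scope R_scope.

(** Write [W(x,y) = Σ_i (v_i(y) - v_i(x)) H_i(y - x)] with [H(z) = z/|z|].  The
   first three terms of [L] are [Σ_k (∂_{x_k} + ∂_{y_k})²], and [∂_{x_k} + ∂_{y_k}]
   annihilates every function of [y - x]; so in the second derivatives of [W] all
   terms containing derivatives of [H] cancel, leaving [Σ_i (Δv_i(y) - Δv_i(x)) H_i],
   which is the right-hand side once Schwarz's theorem gives [Δ v_i = (Δ v)_i].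
   The last term of [L] vanishes because [H] is homogeneous of degree 0:
   [Σ_j z_j ∂_j H_i = 0] and [Σ_{j,k} z_j z_k ∂_j ∂_k H_i = 0]. *)

Lemma Rplus_associative : ssrfun.associative Rplus.
Proof. by move=> *; rewrite Rplus_assoc. Qed.
HB.instance Definition _ :=
  Monoid.isComLaw.Build R R0 Rplus Rplus_associative Rplus_comm Rplus_0_l.

Definition kron {n} (i j : 'I_n) : R := if i == j then 1 else 0.

Section FiniteSums.
Context {n : nat}.
Implicit Types F G : 'I_n -> R.

Lemma eq_sumI {F G} : (forall i, F i = G i) -> sumI n F = sumI n G.
Proof. by move=> h; rewrite /sumI; apply: eq_bigr => i _; apply: h. Qed.

Lemma sumID F G : sumI n (fun i => F i + G i) = sumI n F + sumI n G.
Proof. by rewrite /sumI big_split. Qed.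

Lemma sumIZ c F : c * sumI n F = sumI n (fun i => c * F i).
Proof.
rewrite /sumI; elim/big_rec2: _ => [|i y1 y2 _ <-]; first by rewrite Rmult_0_r.
by rewrite Rmult_plus_distr_l.
Qed.

Lemma sumI_lin2 a b F G :
  sumI n (fun k => a * F k + b * G k) = a * sumI n F + b * sumI n G.
Proof. by rewrite !sumID !sumIZ. Qed.

Lemma sumI_lin3 a b c F G (K : 'I_n -> R) :
  sumI n (fun k => a * F k + b * G k + c * K k)
  = a * sumI n F + b * sumI n G + c * sumI n K.
Proof. by rewrite !sumID !sumIZ. Qed.

Lemma sumI_eq0 F : (forall i, F i = 0) -> sumI n F = 0.
Proof.
by move=> h; rewrite /sumI big1.
Qed.

Lemma exchange_sumI (H : 'I_n -> 'I_n -> R) :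
  sumI n (fun i => sumI n (fun j => H i j)) = sumI n (fun j => sumI n (fun i => H i j)).
Proof. by rewrite /sumI exchange_big. Qed.

Lemma sumI_kron i F : sumI n (fun j => kron i j * F j) = F i.
Proof.
rewrite /sumI (bigD1 i) //= /kron eqxx big1 ?Rplus_0_r ?Rmult_1_l //.
by move=> j; rewrite eq_sym => /negbTE ->; rewrite Rmult_0_l.
Qed.

Lemma sumI_ge_term {F} i : (forall j, 0 <= F j) -> F i <= sumI n F.
Proof.
move=> h; rewrite /sumI (bigD1 i) //=; set s := (X in _ + X).
have : 0 <= s by apply: big_ind => //; [lra | move=> a b; lra].
lra.
Qed.

Lemma derivable_pt_lim_sumI (F : 'I_n -> R -> R) (l : 'I_n -> R) a :
  (forall i, derivable_pt_lim (F i) a (l i)) ->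
  derivable_pt_lim (fun t => sumI n (fun i => F i t)) a (sumI n l).
Proof.
move=> h; rewrite /sumI; elim: (index_enum _) => [|i r IH].
  have -> : (fun t => \big[Rplus/R0]_(i <- [::] | true) F i t) = fct_cte 0.
    by apply: functional_extensionality => t; rewrite big_nil.
  by rewrite big_nil; apply: derivable_pt_lim_const.
have -> : (fun t => \big[Rplus/R0]_(j <- i :: r | true) F j t) =
          plus_fct (F i) (fun t => \big[Rplus/R0]_(j <- r | true) F j t).
  by apply: functional_extensionality => t; rewrite big_cons.
by rewrite big_cons; apply: derivable_pt_lim_plus.
Qed.

End FiniteSums.

(* The Stdlib derivative rules in pointwise form with implicit arguments, so that
   they compose by unification inside [apply:]. *)
Section DerivativeRules.
Implicit Types (f g : R -> R) (x l lf lg : R).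

Lemma D_ext f g x l :
  derivable_pt_lim f x l -> (forall t, f t = g t) -> derivable_pt_lim g x l.
Proof. by move=> h e; have <- : f = g by apply: functional_extensionality. Qed.

Lemma D_val f x l l' : derivable_pt_lim f x l -> l = l' -> derivable_pt_lim f x l'.
Proof. by move=> h <-. Qed.

Lemma D_const c x : derivable_pt_lim (fun _ => c) x 0.
Proof. exact: derivable_pt_lim_const. Qed.

Lemma D_id x : derivable_pt_lim (fun t => t) x 1.
Proof. exact: derivable_pt_lim_id. Qed.

Lemma D_add f g x lf lg : derivable_pt_lim f x lf -> derivable_pt_lim g x lg ->
  derivable_pt_lim (fun t => f t + g t) x (lf + lg).
Proof. exact: derivable_pt_lim_plus. Qed.

Lemma D_sub f g x lf lg : derivable_pt_lim f x lf -> derivable_pt_lim g x lg ->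
  derivable_pt_lim (fun t => f t - g t) x (lf - lg).
Proof. exact: derivable_pt_lim_minus. Qed.

Lemma D_opp f x lf : derivable_pt_lim f x lf ->
  derivable_pt_lim (fun t => - f t) x (- lf).
Proof. exact: derivable_pt_lim_opp. Qed.

Lemma D_mul f g x lf lg : derivable_pt_lim f x lf -> derivable_pt_lim g x lg ->
  derivable_pt_lim (fun t => f t * g t) x (lf * g x + f x * lg).
Proof. exact: derivable_pt_lim_mult. Qed.

Lemma D_div f g x lf lg :
  derivable_pt_lim f x lf -> derivable_pt_lim g x lg -> g x <> 0 ->
  derivable_pt_lim (fun t => f t / g t) x ((lf * g x - lg * f x) / (g x * g x)).
Proof. exact: derivable_pt_lim_div. Qed.

Lemma D_comp f g x lf lg :
  derivable_pt_lim f x lf -> derivable_pt_lim g (f x) lg ->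
  derivable_pt_lim (fun t => g (f t)) x (lg * lf).
Proof. exact: derivable_pt_lim_comp. Qed.

Lemma D_local f g x l e : 0 < e -> (forall t, Rabs (t - x) < e -> f t = g t) ->
  derivable_pt_lim f x l -> derivable_pt_lim g x l.
Proof.
move=> e0 hfg hf eps eps0; case: (hf eps eps0) => d hd.
have m0 : 0 < Rmin d e by apply: Rmin_pos => //; apply: cond_pos.
exists (mkposreal _ m0) => h h0 hh /=.
have hx : g x = f x by rewrite hfg // Rminus_diag Rabs_R0.
have hxh : g (x + h) = f (x + h).
  by rewrite hfg // (_ : x + h - x = h); [apply: Rlt_le_trans hh (Rmin_r _ _) | ring].
by rewrite hx hxh; apply: hd => //; apply: Rlt_le_trans hh (Rmin_l _ _).
Qed.

End DerivativeRules.
Arguments D_ext {f g x l}.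
Arguments D_val {f x l l'}.
Arguments D_add {f g x lf lg}.
Arguments D_sub {f g x lf lg}.
Arguments D_opp {f x lf}.
Arguments D_mul {f g x lf lg}.
Arguments D_div {f g x lf lg}.
Arguments D_comp {f g x lf lg}.
Arguments D_local {f g x l e}.

Section PartialDerivatives.
Context {n : nat}.
Implicit Types (p : Rn n) (F G : Rn n -> R).

Lemma upd_at p i t : upd p i t i = t.
Proof. by rewrite /upd eqxx. Qed.

Lemma upd_ne p i t j : j != i -> upd p i t j = p j.
Proof. by rewrite /upd => /negbTE ->. Qed.

Lemma upd_id p i : upd p i (p i) = p.
Proof. by apply: functional_extensionality => j; rewrite /upd; case: eqP => [->|]. Qed.

Lemma upd_upd p i s t : upd (upd p i s) i t = upd p i t.
Proof. by apply: functional_extensionality => j; rewrite /upd; case: eqP. Qed.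

Lemma upd_comm p i j s t : i != j -> upd (upd p i s) j t = upd (upd p j t) i s.
Proof.
move=> ij; apply: functional_extensionality => k; rewrite /upd.
by case: (eqVneq k j) => [->|] //; rewrite eq_sym (negbTE ij).
Qed.

Lemma pd_spec {i F p} : has_pd i F p ->
  derivable_pt_lim (fun t => F (upd p i t)) (p i) (pd i F p).
Proof. by move=> h; rewrite /pd; apply: (epsilon_spec (inhabits R0) _ h). Qed.

Lemma pd_unique {i F p l} :
  derivable_pt_lim (fun t => F (upd p i t)) (p i) l -> pd i F p = l.
Proof.
move=> h; have hp : has_pd i F p by exists l.
exact: uniqueness_limite _ _ _ _ (pd_spec hp) h.
Qed.

Lemma pd_local {i F G p e} : 0 < e ->
  (forall q : Rn n, (forall j, Rabs (q j - p j) < e) -> F q = G q) ->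
  pd i F p = pd i G p.
Proof.
move=> e0 h; rewrite /pd; f_equal.
have hl : forall t, Rabs (t - p i) < e -> F (upd p i t) = G (upd p i t).
  move=> t ht; apply: h => j; case: (eqVneq j i) => [->|ji]; first by rewrite upd_at.
  by rewrite upd_ne // Rminus_diag Rabs_R0.
apply: functional_extensionality => l; apply: propositional_extensionality; split.
  exact: D_local e0 hl.
by apply: (D_local e0) => t ht; rewrite hl.
Qed.

End PartialDerivatives.

Lemma eq_of_small_dist u w : (forall eps, 0 < eps -> Rabs (u - w) < eps) -> u = w.
Proof.
move=> h; case: (Req_dec u w) => // huw.
have hp : 0 < Rabs (u - w) by apply: Rabs_pos_lt; lra.
by have := h _ hp; lra.
Qed.

Section Schwarz.
Variables (n : nat) (f : Rn n -> R) (O : Rn n -> Prop) (a b : 'I_n).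
Hypothesis ab : a != b.
Hypotheses (fa : forall q, O q -> has_pd a f q) (fb : forall q, O q -> has_pd b f q).
Hypotheses (fab : forall q, O q -> has_pd b (pd a f) q)
           (fba : forall q, O q -> has_pd a (pd b f) q).

Definition upd2 (p : Rn n) s t := upd (upd p a s) b t.

Definition square (p : Rn n) h s t := p a <= s <= p a + h /\ p b <= t <= p b + h.

Lemma upd2_dist {p h s t} : square p h s t -> forall m, Rabs (upd2 p s t m - p m) <= h.
Proof.
move=> [hs ht] m; rewrite /upd2 /upd.
case: eqP => [->|_]; first by rewrite Rabs_pos_eq; lra.
case: eqP => [->|_]; first by rewrite Rabs_pos_eq; lra.
by rewrite Rminus_diag Rabs_R0; lra.
Qed.

Lemma derivable_upd2_fst {F p s t} : has_pd a F (upd2 p s t) ->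
  derivable_pt_lim (fun s' => F (upd2 p s' t)) s (pd a F (upd2 p s t)).
Proof.
move=> /pd_spec; rewrite {2}/upd2 upd_ne // upd_at => hD.
apply: D_ext hD _ => u; congr F.
by rewrite /upd2 (upd_comm _ _ _ _ _ ab) upd_upd -upd_comm.
Qed.

Lemma derivable_upd2_snd {F p s t} : has_pd b F (upd2 p s t) ->
  derivable_pt_lim (fun t' => F (upd2 p s t')) t (pd b F (upd2 p s t)).
Proof.
move=> /pd_spec; rewrite {2}/upd2 upd_at => hD.
by apply: D_ext hD _ => u; rewrite /upd2 upd_upd.
Qed.

(* Both mixed partials times [h²] equal the second difference of [f] over the
   square, by the mean value theorem applied twice in either order. *)
Lemma mixed_partials_meet p h : 0 < h ->
  (forall s t, square p h s t -> O (upd2 p s t)) ->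
  exists c d c' d', [/\ square p h c d, square p h c' d'
    & pd b (pd a f) (upd2 p c d) = pd a (pd b f) (upd2 p c' d')].
Proof.
move=> h0 hO.
have hA : p a < p a + h by lra.
have hB : p b < p b + h by lra.
have inO s t hs ht : O (upd2 p s t) := hO s t (conj hs ht).
have lo s : p a <= s <= p a + h -> p b <= p b <= p b + h by lra.
have hi s : p a <= s <= p a + h -> p b <= p b + h <= p b + h by lra.
have [c [e1 hc]] := MVT_cor2
  (fun s => f (upd2 p s (p b + h)) - f (upd2 p s (p b)))
  (fun s => pd a f (upd2 p s (p b + h)) - pd a f (upd2 p s (p b))) _ _ hA
  (fun s hs => D_sub (derivable_upd2_fst (fa _ (inO _ _ hs (hi s hs))))
                     (derivable_upd2_fst (fa _ (inO _ _ hs (lo s hs))))).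
have ic : p a <= c <= p a + h by lra.
have [d [e2 hd]] := MVT_cor2 (fun t => pd a f (upd2 p c t))
  (fun t => pd b (pd a f) (upd2 p c t)) _ _ hB
  (fun t ht => derivable_upd2_snd (fab _ (inO _ _ ic ht))).
have lo' t : p b <= t <= p b + h -> p a <= p a <= p a + h by lra.
have hi' t : p b <= t <= p b + h -> p a <= p a + h <= p a + h by lra.
have [d' [e3 hd']] := MVT_cor2
  (fun t => f (upd2 p (p a + h) t) - f (upd2 p (p a) t))
  (fun t => pd b f (upd2 p (p a + h) t) - pd b f (upd2 p (p a) t)) _ _ hB
  (fun t ht => D_sub (derivable_upd2_snd (fb _ (inO _ _ (hi' t ht) ht)))
                     (derivable_upd2_snd (fb _ (inO _ _ (lo' t ht) ht)))).
have id' : p b <= d' <= p b + h by lra.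
have [c' [e4 hc']] := MVT_cor2 (fun s => pd b f (upd2 p s d'))
  (fun s => pd a (pd b f) (upd2 p s d')) _ _ hA
  (fun s hs => derivable_upd2_fst (fba _ (inO _ _ hs id'))).
exists c, d, c', d'; split; [by split; lra | by split; lra |].
rewrite (_ : p a + h - p a = h) in e1 e4; last by ring.
rewrite (_ : p b + h - p b = h) in e2 e3; last by ring.
set X := pd b (pd a f) _ in e2 *; set Y := pd a (pd b f) _ in e4 *.
have : (X - Y) * (h * h) = 0 by nra.
by case/Rmult_integral; [lra | nra].
Qed.

Lemma pd_comm_of_cont p : openRn O -> O p ->
  cont_at (pd b (pd a f)) p -> cont_at (pd a (pd b f)) p ->
  pd b (pd a f) p = pd a (pd b f) p.
Proof.
move=> Oopen Op cba cab; case: (Oopen p Op) => e [e0 he].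
apply: eq_of_small_dist => eps eps0.
have eps2 : 0 < eps / 2 by lra.
have [d1 [d10 hd1]] := cba _ eps2; have [d2 [d20 hd2]] := cab _ eps2.
set r := Rmin e (Rmin d1 d2).
have r0 : 0 < r by apply: Rmin_pos => //; apply: Rmin_pos.
have re : r <= e by apply: Rmin_l.
have r1 : r <= d1 by apply: Rle_trans (Rmin_r _ _) (Rmin_l _ _).
have r2 : r <= d2 by apply: Rle_trans (Rmin_r _ _) (Rmin_r _ _).
have h0 : 0 < r / 2 by lra.
have near s t : square p (r / 2) s t -> forall m, Rabs (upd2 p s t m - p m) < r.
  by move=> hst m; have := upd2_dist hst m; lra.
have [c [d [c' [d' [hcd hcd' hXY]]]]] :=
  mixed_partials_meet _ _ h0
    (fun s t hst => he _ (fun m => Rlt_le_trans _ _ _ (near _ _ hst m) re)).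
have /Rabs_def2 [lo1 hi1] := hd1 _ (fun m => Rlt_le_trans _ _ _ (near _ _ hcd m) r1).
have /Rabs_def2 [lo2 hi2] := hd2 _ (fun m => Rlt_le_trans _ _ _ (near _ _ hcd' m) r2).
by rewrite hXY in lo1 hi1; apply: Rabs_def1; lra.
Qed.

End Schwarz.

Lemma smooth_pd_comm {n} {O : Rn n -> Prop} {v} ks a b {p} :
  openRn O -> smooth_on O v -> O p ->
  pd a (pd b (pdl ks v)) p = pd b (pd a (pdl ks v)) p.
Proof.
move=> Oopen vs Op; case: (eqVneq a b) => [->//|ab].
have has_pd_all ks' i q : O q -> has_pd i (pdl ks' v) q by move=> Oq; exact: (proj2 (vs ks' q Oq)).
apply: (@pd_comm_of_cont n (pdl ks v) O b a); rewrite 1?eq_sym //.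
- exact: has_pd_all ks b.
- exact: has_pd_all ks a.
- exact: has_pd_all (b :: ks) a.
- exact: has_pd_all (a :: ks) b.
- exact: proj1 (vs [:: a, b & ks] p Op).
- exact: proj1 (vs [:: b, a & ks] p Op).
Qed.

Section UnitDirection.
Context {n : nat}.
Implicit Types z : Rn n.

Definition sqnorm z := sumI n (fun m => z m ^ 2).
Definition enorm z := sqrt (sqnorm z).
Definition dir (i : 'I_n) z := z i / enorm z.
Definition ddir (i j : 'I_n) z := (kron i j - dir i z * dir j z) / enorm z.
Definition d2dir (i k j : 'I_n) z :=
  (- (ddir i j z * dir k z + dir i z * ddir k j z)
   - (kron i k - dir i z * dir k z) * dir j z / enorm z) / enorm z.

Lemma sqnorm_upd z j s : sqnorm (upd z j s) = sqnorm z - z j ^ 2 + s ^ 2.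
Proof.
rewrite /sqnorm /sumI (bigD1 j) // [in RHS](bigD1 j) // upd_at.
rewrite (eq_bigr (fun i => z i ^ 2)) => [|i hi]; last by rewrite upd_ne.
by rewrite /=; ring.
Qed.

Lemma sqnorm_gt0P z : 0 < sqnorm z <-> exists m, z m <> 0.
Proof.
split=> [hp | [m h]].
  apply: NNPP => hz; suff : sqnorm z = 0 by lra.
  apply: sumI_eq0 => m; have -> : z m = 0 by apply: NNPP => hm; apply: hz; exists m.
  by ring.
have := Rsqr_pos_lt _ h; have := sumI_ge_term m (fun i => pow2_ge_0 (z i)).
by rewrite /Rsqr /sqnorm /= Rmult_1_r; lra.
Qed.

Lemma enorm_gt0 {z} : 0 < sqnorm z -> 0 < enorm z.
Proof. exact: sqrt_lt_R0. Qed.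

Lemma derivable_coord z i j : derivable_pt_lim (fun s => upd z j s i) (z j) (kron i j).
Proof. by rewrite /kron /upd; case: eqP => _; [exact: D_id | exact: D_const]. Qed.

Lemma derivable_enorm {z} j : 0 < sqnorm z ->
  derivable_pt_lim (fun s => enorm (upd z j s)) (z j) (dir j z).
Proof.
move=> hp; have hN := enorm_gt0 hp.
have hS : derivable_pt_lim (fun s => sqnorm (upd z j s)) (z j) (2 * z j).
  apply: (D_ext (f := fun s => sqnorm z - z j ^ 2 + s ^ 2)); last by move=> s; rewrite sqnorm_upd.
  by apply: D_val (D_add (D_const _ _) (derivable_pt_lim_pow _ 2)) _; rewrite /=; ring.
apply: D_val (D_comp hS _) _; first by rewrite upd_id; exact: derivable_pt_lim_sqrt.
by rewrite /dir -/(enorm z); field; lra.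
Qed.

Lemma derivable_dir {z} i j : 0 < sqnorm z ->
  derivable_pt_lim (fun s => dir i (upd z j s)) (z j) (ddir i j z).
Proof.
move=> hp; have hN := enorm_gt0 hp.
apply: D_val (D_div (derivable_coord z i j) (derivable_enorm j hp) _) _;
  rewrite /= upd_id; first lra.
by rewrite /ddir /dir; field; lra.
Qed.

Lemma derivable_ddir {z} i k j : 0 < sqnorm z ->
  derivable_pt_lim (fun s => ddir i k (upd z j s)) (z j) (d2dir i k j z).
Proof.
move=> hp; have hN := enorm_gt0 hp.
apply: D_val (D_div (D_sub (D_const _ _) (D_mul (derivable_dir i j hp)
  (derivable_dir k j hp))) (derivable_enorm j hp) _) _; rewrite /= upd_id; first lra.
by rewrite /d2dir; field; lra.
Qed.

Lemma sum_dir_sq {z} : 0 < sqnorm z -> sumI n (fun j => dir j z * dir j z) = 1.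
Proof.
move=> hp; have hN := enorm_gt0 hp.
have hNN : enorm z * enorm z = sqnorm z by rewrite /enorm sqrt_sqrt //; lra.
rewrite (eq_sumI (G := fun j => / (enorm z * enorm z) * (z j ^ 2))); last first.
  by move=> j; rewrite /dir; field; lra.
by rewrite -sumIZ -/(sqnorm z) hNN; field; lra.
Qed.

Lemma ddir_sym z i j : ddir i j z = ddir j i z.
Proof. by rewrite /ddir /kron eq_sym; congr ((_ - _) / _); ring. Qed.

(* Euler's identity for [dir], which is homogeneous of degree 0. *)
Lemma sum_dir_ddir {z} i : 0 < sqnorm z -> sumI n (fun j => dir j z * ddir i j z) = 0.
Proof.
move=> hp; have hN := enorm_gt0 hp.
rewrite (eq_sumI (G := fun j => / enorm z * (kron i j * dir j z)
                              + (- (dir i z / enorm z)) * (dir j z * dir j z))).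
  by rewrite sumI_lin2 sumI_kron sum_dir_sq //; field; lra.
by move=> j; rewrite /ddir; field; lra.
Qed.

Lemma sum_dir_dir_d2dir {z} i : 0 < sqnorm z ->
  sumI n (fun j => sumI n (fun k => dir j z * dir k z * d2dir i k j z)) = 0.
Proof.
move=> hp; have hN := enorm_gt0 hp.
rewrite (eq_sumI (G := fun j => (- / enorm z) * (dir j z * ddir i j z))).
  by rewrite -sumIZ sum_dir_ddir //; ring.
move=> j.
set c1 := - dir j z * ddir i j z / enorm z
          + dir i z * dir j z * dir j z / (enorm z * enorm z).
set c2 := - dir i z * dir j z / enorm z.
set c3 := - dir j z * dir j z / (enorm z * enorm z).
rewrite (eq_sumI (G := fun k => c1 * (dir k z * dir k z) + c2 * (dir k z * ddir j k z)
                              + c3 * (kron i k * dir k z))).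
  by rewrite sumI_lin3 sum_dir_sq // sum_dir_ddir // sumI_kron /c1 /c3; field; lra.
by move=> k; rewrite /d2dir (ddir_sym z k j) /c1 /c2 /c3; field; lra.
Qed.

(* The two Euler identities in the shape produced by the term
   [Σ_{i,j} X_i X_j ∂_{x_i} ∂_{y_j}] of [L]. *)
Lemma sum_radial_ddir_d2dir {z} m (a b : 'I_n -> R) c : 0 < sqnorm z ->
  sumI n (fun i => sumI n (fun j => dir i z * dir j z *
    (a j * ddir m i z + b i * ddir m j z + c * d2dir m j i z))) = 0.
Proof.
move=> hp.
rewrite (eq_sumI (G := fun i => sumI n (fun j => dir j z * a j) * (dir i z * ddir m i z)
                              + c * sumI n (fun j => dir i z * dir j z * d2dir m j i z))).
  by rewrite sumI_lin2 sum_dir_ddir // sum_dir_dir_d2dir //; ring.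
move=> i.
rewrite (eq_sumI (G := fun j => (dir i z * ddir m i z) * (dir j z * a j)
     + (dir i z * b i) * (dir j z * ddir m j z) + c * (dir i z * dir j z * d2dir m j i z)))
  => [|j]; last by ring.
by rewrite sumI_lin3 sum_dir_ddir //; ring.
Qed.

End UnitDirection.

Definition disp {n} (x y : Rn n) : Rn n := fun m => y m - x m.

Section Displacement.
Context {n : nat}.
Implicit Types (x y : Rn n) (Phi : Rn n -> R).

Lemma disp_upd_r x y j t : disp x (upd y j t) = upd (disp x y) j (t - x j).
Proof. by apply: functional_extensionality => m; rewrite /disp /upd; case: eqP => [->|]. Qed.

Lemma disp_upd_l x y j t : disp (upd x j t) y = upd (disp x y) j (y j - t).
Proof. by apply: functional_extensionality => m; rewrite /disp /upd; case: eqP => [->|]. Qed.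

Lemma Xc_dir i x y : Xc i x y = dir i (disp x y).
Proof. by []. Qed.

Lemma derivable_disp_r {Phi x y j d} :
  derivable_pt_lim (fun s => Phi (upd (disp x y) j s)) (disp x y j) d ->
  derivable_pt_lim (fun t => Phi (disp x (upd y j t))) (y j) d.
Proof.
move=> h; have h2 := D_comp (D_sub (D_id (y j)) (D_const (x j) (y j))) h.
apply: D_ext (D_val h2 _) _ => [|t]; [ring | by rewrite disp_upd_r].
Qed.

Lemma derivable_disp_l {Phi x y j d} :
  derivable_pt_lim (fun s => Phi (upd (disp x y) j s)) (disp x y j) d ->
  derivable_pt_lim (fun t => Phi (disp (upd x j t) y)) (x j) (- d).
Proof.
move=> h; have h2 := D_comp (D_sub (D_const (y j) (x j)) (D_id (x j))) h.
apply: D_ext (D_val h2 _) _ => [|t]; [ring | by rewrite disp_upd_l].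
Qed.

End Displacement.

Section GradientDifference.
Context {n : nat} {Omega : Rn n -> Prop} {v : Rn n -> R}.
Hypotheses (Omega_open : openRn Omega) (v_smooth : smooth_on Omega v).
Implicit Types (x y p : Rn n).

Local Notation W := (grad_diff_dot v).

Definition admissible x y := [/\ Omega x, Omega y & 0 < sqnorm (disp x y)].

Lemma admissible_of_neq {x y} : Omega x -> Omega y -> x <> y -> admissible x y.
Proof.
move=> Ox Oy xy; split=> //; apply/sqnorm_gt0P; apply: NNPP => hz; apply: xy.
apply: functional_extensionality => m.
have : disp x y m = 0 by apply: NNPP => hm; apply: hz; exists m.
by rewrite /disp; lra.
Qed.

Lemma admissible_nbhd {x y} : admissible x y -> exists e, 0 < e /\
  (forall x', (forall m, Rabs (x' m - x m) < e) -> admissible x' y) /\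
  (forall y', (forall m, Rabs (y' m - y m) < e) -> admissible x y').
Proof.
move=> [Ox Oy /sqnorm_gt0P [m0 hm0]].
case: (Omega_open _ Ox) => ex [ex0 hex]; case: (Omega_open _ Oy) => ey [ey0 hey].
have c0 : 0 < Rabs (disp x y m0) by apply: Rabs_pos_lt.
set c := Rabs (disp x y m0) in c0.
set e := Rmin (Rmin ex ey) (c / 2).
have e0 : 0 < e by repeat apply: Rmin_pos => //; lra.
have eex : e <= ex by apply: Rle_trans (Rmin_l _ _) (Rmin_l _ _).
have eey : e <= ey by apply: Rle_trans (Rmin_l _ _) (Rmin_r _ _).
have ec : e <= c / 2 by apply: Rmin_r.
exists e; split=> //; split=> [x' hx' | y' hy']; split=> //.
- by apply: hex => m; have := hx' m; lra.
- apply/sqnorm_gt0P; exists m0; rewrite /disp => h0.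
  have := hx' m0; rewrite (_ : x' m0 - x m0 = disp x y m0) -/c; first lra.
  by rewrite /disp; lra.
- by apply: hey => m; have := hy' m; lra.
- apply/sqnorm_gt0P; exists m0; rewrite /disp => h0.
  have := hy' m0; rewrite (_ : y' m0 - y m0 = - disp x y m0); last by rewrite /disp; lra.
  by rewrite Rabs_Ropp -/c; lra.
Qed.

Lemma has_pd_d1 {p} i k : Omega p -> has_pd k (pd i v) p.
Proof. by move=> Op; exact: (proj2 (v_smooth [:: i] p Op)). Qed.

Lemma has_pd_d2 {p} i k j : Omega p -> has_pd j (pd k (pd i v)) p.
Proof. by move=> Op; exact: (proj2 (v_smooth [:: k; i] p Op)). Qed.

Definition Wy k x y := sumI n (fun i =>
  pd k (pd i v) y * dir i (disp x y) + (pd i v y - pd i v x) * ddir i k (disp x y)).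

Definition Wx k x y := sumI n (fun i =>
  - pd k (pd i v) x * dir i (disp x y) - (pd i v y - pd i v x) * ddir i k (disp x y)).

Definition Wyy j k x y := sumI n (fun i =>
  pd j (pd k (pd i v)) y * dir i (disp x y)
  + pd k (pd i v) y * ddir i j (disp x y) + pd j (pd i v) y * ddir i k (disp x y)
  + (pd i v y - pd i v x) * d2dir i k j (disp x y)).

Definition Wxx j k x y := sumI n (fun i =>
  - pd j (pd k (pd i v)) x * dir i (disp x y)
  + pd k (pd i v) x * ddir i j (disp x y) + pd j (pd i v) x * ddir i k (disp x y)
  + (pd i v y - pd i v x) * d2dir i k j (disp x y)).

Definition Wxy j k x y := sumI n (fun i =>
  - pd k (pd i v) y * ddir i j (disp x y) - pd j (pd i v) x * ddir i k (disp x y)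
  - (pd i v y - pd i v x) * d2dir i k j (disp x y)).

Lemma dy_W {x y} k : admissible x y -> dy k W x y = Wy k x y.
Proof.
move=> [Ox Oy hp]; apply: pd_unique.
apply: D_val; first apply: derivable_pt_lim_sumI => i.
  exact: D_mul (D_sub (pd_spec (has_pd_d1 i k Oy)) (D_const _ _))
               (derivable_disp_r (derivable_dir i k hp)).
by apply: eq_sumI => i /=; rewrite upd_id; ring.
Qed.

Lemma dx_W {x y} k : admissible x y -> dx k W x y = Wx k x y.
Proof.
move=> [Ox Oy hp]; apply: pd_unique.
apply: D_val; first apply: derivable_pt_lim_sumI => i.
  exact: D_mul (D_sub (D_const _ _) (pd_spec (has_pd_d1 i k Ox)))
               (derivable_disp_l (derivable_dir i k hp)).
by apply: eq_sumI => i /=; rewrite upd_id; ring.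
Qed.

Lemma dyy_W {x y} j k : admissible x y -> dy j (dy k W) x y = Wyy j k x y.
Proof.
move=> xy; have [e [e0 [_ near_y]]] := admissible_nbhd xy; case: xy => [Ox Oy hp].
rewrite /dy (pd_local (G := Wy k x) e0) => [|q hq]; last exact: dy_W k (near_y q hq).
apply: pd_unique; apply: D_val; first apply: derivable_pt_lim_sumI => i.
  exact: D_add (D_mul (pd_spec (has_pd_d2 i k j Oy)) (derivable_disp_r (derivable_dir i j hp)))
    (D_mul (D_sub (pd_spec (has_pd_d1 i j Oy)) (D_const _ _))
           (derivable_disp_r (derivable_ddir i k j hp))).
by apply: eq_sumI => i /=; rewrite upd_id; ring.
Qed.

Lemma dxx_W {x y} j k : admissible x y -> dx j (dx k W) x y = Wxx j k x y.
Proof.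
move=> xy; have [e [e0 [near_x _]]] := admissible_nbhd xy; case: xy => [Ox Oy hp].
rewrite /dx (pd_local (G := fun x' => Wx k x' y) e0) => [|q hq]; last exact: dx_W k (near_x q hq).
apply: pd_unique; apply: D_val; first apply: derivable_pt_lim_sumI => i.
  exact: D_sub (D_mul (D_opp (pd_spec (has_pd_d2 i k j Ox)))
                      (derivable_disp_l (derivable_dir i j hp)))
    (D_mul (D_sub (D_const _ _) (pd_spec (has_pd_d1 i j Ox)))
           (derivable_disp_l (derivable_ddir i k j hp))).
by apply: eq_sumI => i /=; rewrite upd_id; ring.
Qed.

Lemma dxy_W {x y} j k : admissible x y -> dx j (dy k W) x y = Wxy j k x y.
Proof.
move=> xy; have [e [e0 [near_x _]]] := admissible_nbhd xy; case: xy => [Ox Oy hp].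
rewrite /dx (pd_local (G := fun x' => Wy k x' y) e0) => [|q hq]; last exact: dy_W k (near_x q hq).
apply: pd_unique; apply: D_val; first apply: derivable_pt_lim_sumI => i.
  exact: D_add (D_mul (D_const _ _) (derivable_disp_l (derivable_dir i j hp)))
    (D_mul (D_sub (D_const _ _) (pd_spec (has_pd_d1 i j Ox)))
           (derivable_disp_l (derivable_ddir i k j hp))).
by apply: eq_sumI => i /=; rewrite upd_id; ring.
Qed.

Lemma Lop_trace_part {x y} : admissible x y ->
  sumI n (fun k => dx k (dx k W) x y) + sumI n (fun k => dy k (dy k W) x y)
  + 2 * sumI n (fun k => dx k (dy k W) x y)
  = sumI n (fun i => (sumI n (fun k => pd k (pd k (pd i v)) y)
                      - sumI n (fun k => pd k (pd k (pd i v)) x)) * dir i (disp x y)).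
Proof.
move=> xy; rewrite (eq_sumI (fun k => dxx_W k k xy)) (eq_sumI (fun k => dyy_W k k xy)).
rewrite (eq_sumI (fun k => dxy_W k k xy)) sumIZ -!sumID.
rewrite (eq_sumI (G := fun k => sumI n (fun i =>
  (pd k (pd k (pd i v)) y - pd k (pd k (pd i v)) x) * dir i (disp x y)))).
  rewrite exchange_sumI; apply: eq_sumI => i.
  rewrite (eq_sumI (G := fun k => dir i (disp x y) * pd k (pd k (pd i v)) y
                                + (- dir i (disp x y)) * pd k (pd k (pd i v)) x)) => [|k].
    by rewrite sumI_lin2; ring.
  by ring.
by move=> k; rewrite /Wxx /Wyy /Wxy sumIZ -!sumID; apply: eq_sumI => i; ring.
Qed.

Lemma Lop_radial_part {x y} : admissible x y ->
  sumI n (fun i => sumI n (fun j => Xc i x y * Xc j x y * dx i (dy j W) x y)) = 0.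
Proof.
move=> xy; have [_ _ hp] := xy.
rewrite (eq_sumI (G := fun i => sumI n (fun m => sumI n (fun j =>
  dir i (disp x y) * dir j (disp x y) * ((- pd j (pd m v) y) * ddir m i (disp x y)
    + (- pd i (pd m v) x) * ddir m j (disp x y)
    + (- (pd m v y - pd m v x)) * d2dir m j i (disp x y)))))).
  by rewrite exchange_sumI; apply: sumI_eq0 => m; apply: sum_radial_ddir_d2dir.
move=> i; rewrite exchange_sumI; apply: eq_sumI => j.
by rewrite dxy_W // /Wxy sumIZ !Xc_dir; apply: eq_sumI => m; ring.
Qed.

Lemma pd_lap {p} i : Omega p -> pd i (lap v) p = sumI n (fun k => pd k (pd k (pd i v)) p).
Proof.
move=> Op; apply: pd_unique; apply: derivable_pt_lim_sumI => k.
have -> : pd k (pd k (pd i v)) p = pd i (pd k (pd k v)) p.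
  rewrite (smooth_pd_comm [:: k] i k Omega_open v_smooth Op) /=.
  case: (Omega_open _ Op) => e [e0 he]; apply: (pd_local e0) => q hq.
  by have := smooth_pd_comm [::] k i Omega_open v_smooth (he q hq).
exact: pd_spec (has_pd_d2 k k i Op).
Qed.

End GradientDifference.

Theorem lemma2p2 (n : nat) (Omega : Rn n -> Prop) (v : Rn n -> R) :
  openRn Omega -> smooth_on Omega v ->
  forall x y : Rn n, Omega x -> Omega y -> x <> y ->
  Lop (grad_diff_dot v) x y = grad_diff_dot (lap v) x y.
Proof.
move=> Omega_open v_smooth x y Ox Oy xy.
have adm := admissible_of_neq Ox Oy xy.
rewrite /Lop (Lop_trace_part Omega_open v_smooth adm).
rewrite (Lop_radial_part Omega_open v_smooth adm) Rmult_0_r Rminus_0_r.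
apply: eq_sumI => i.
by rewrite (pd_lap Omega_open v_smooth i Ox) (pd_lap Omega_open v_smooth i Oy).
Qed.
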